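(* Let $G$ be a connected graph with a universal vertex $v$ (adjacent to all other vertices). Then $v$ is not a basis forced vertex of $G$.
   Context: All graphs are finite and simple. For vertices $u,w$ of a connected graph $G$, $d(u,w)$ is the length of a shortest $u$–$w$ path. A set $R\subseteq V(G)$ is a resolving set if for all distinct $x,y\in V(G)$ there is $r\in R$ with $d(r,x)\neq d(r,y)$. The metric dimension $\dim(G)$ is the minimum cardinality of a resolving set, and a resolving set of cardinality $\dim(G)$ is a metric basis. A vertex is a basis forced vertex if it belongs to every metric basis of $G$. *)

(* A finite simple graph is a symmetric irreflexive
   relation e on a finType T. *)
From mathcomp Require Import all_boot.
Set Implicit Arguments. Unset Strict Implicit. Unset Printing Implicit Defensive.

Section MetricDim.
Variables (T : finType) (e : rel T).

Definition walkb (n : nat) (u w : T) : bool :=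
  [exists p : n.-tuple T, path e u p && (last u p == w)].

Definition gconnected : Prop := forall u w : T, connect e u w.

(* distance = least length of a u-w walk (= shortest path length).
   In a connected graph such a length is < #|T|; the default #|T| is
   never reached for connected graphs. *)
Definition dist (u w : T) : nat := find (fun n => walkb n u w) (iota 0 #|T|).

Definition resolving (R : {set T}) : bool :=
  [forall x : T, forall y : T,
     (x != y) ==> [exists r in R, dist r x != dist r y]].

(* metric dimension: minimum cardinality of a resolving set
   (the full vertex set is always resolving, so #|T| is a valid default). *)
Definition metric_dim : nat :=
  \big[minn/#|T|]_(S : {set T} | resolving S) #|S|.

Definition metric_basis (B : {set T}) : Prop :=
  resolving B /\ #|B| = metric_dim.

Definition basis_forced (v : T) : Prop :=
  forall B : {set T}, metric_basis B -> v \in B.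

End MetricDim.

From mathcomp Require Import all_boot order.
Set Implicit Arguments. Unset Strict Implicit. Unset Printing Implicit Defensive.

(* A universal vertex v is at distance 1 from every other vertex, so in a
   metric basis B it only separates v from the rest; B :\ v still separates
   all other pairs. Hence B :\ v fails to be resolving only because of a
   vertex x0 <> v that B :\ v cannot tell from v, and such an x0 is unique
   since B :\ v separates any two vertices other than v.
   By minimality of B this must happen, and then x0 |: B :\ v is a metric
   basis avoiding v. *)

Section Resolving.
Variables (T : finType) (e : rel T).

Lemma walkb0 (u w : T) : walkb e 0 u w = (u == w).
Proof.
apply/existsP/idP => [[p] | uw]; first by rewrite (tuple0 p).
by exists [tuple]; rewrite /= uw.
Qed.

Lemma walkb1 (u w : T) : walkb e 1 u w = e u w.
Proof.
apply/existsP/idP => [[p] | euw]; last by exists [tuple w]; rewrite /= euw eqxx.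
by case/tupleP: p => x p; rewrite (tuple0 p) /= andbT => /andP[euw /eqP <-].
Qed.

Lemma dist_eq0 (u w : T) : (dist e u w == 0) = (u == w).
Proof.
have : 0 < #|T| by apply/card_gt0P; exists u.
by rewrite /dist; case: #|T| => // n _ /=; rewrite walkb0; case: (u == w).
Qed.

Lemma dist_refl (u : T) : dist e u u = 0.
Proof. by apply/eqP; rewrite dist_eq0. Qed.

Lemma dist_adj (u w : T) : u != w -> e u w -> dist e u w = 1.
Proof.
move=> uw euw; have : 1 < #|T| by rewrite (cardD1 u) (cardD1 w) !inE eq_sym uw.
by rewrite /dist; case: #|T| => [|[|n]] // _ /=; rewrite walkb0 (negbTE uw) walkb1 euw.
Qed.

Definition resolves (S : {set T}) (x y : T) : bool :=
  [exists r in S, dist e r x != dist e r y].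

Lemma resolvingP (S : {set T}) :
  reflect (forall x y, x != y -> resolves S x y) (resolving e S).
Proof.
apply: (iffP forallP) => [resS x y | resS x].
  by move: (resS x) => /forallP/(_ y)/implyP.
by apply/forallP => y; apply/implyP; exact: resS.
Qed.

Lemma resolvesC (S : {set T}) (x y : T) : resolves S x y = resolves S y x.
Proof. by apply: eq_existsb => r; rewrite eq_sym. Qed.

Lemma resolving_pivot (S : {set T}) (v : T) :
  (forall x y, x != v -> y != v -> x != y -> resolves S x y) ->
  (forall x, x != v -> resolves S x v) -> resolving e S.
Proof.
move=> sep sepv; apply/resolvingP => x y xy.
case: (eqVneq x v) xy => [-> | xv] xy; first by rewrite resolvesC sepv // eq_sym.
by case: (eqVneq y v) => [-> | yv]; [exact: sepv | exact: sep].
Qed.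

Lemma resolvesS (S S' : {set T}) (x y : T) :
  S \subset S' -> resolves S x y -> resolves S' x y.
Proof.
move=> sSS' /exists_inP[r rS dxy]; apply/exists_inP; exists r => //.
exact: subsetP rS.
Qed.

Lemma resolves_split (S : {set T}) (x y z : T) :
  resolves S x y -> resolves S x z || resolves S z y.
Proof.
case/exists_inP=> r rS dxy; case: (eqVneq (dist e r x) (dist e r z)) => [dxz | dxz].
  by apply/orP; right; apply/exists_inP; exists r; rewrite -?dxz.
by apply/orP; left; apply/exists_inP; exists r.
Qed.

Lemma mem_resolves (S : {set T}) (r y : T) : r \in S -> r != y -> resolves S r y.
Proof.
by move=> rS ry; apply/exists_inP; exists r; rewrite // dist_refl eq_sym dist_eq0.
Qed.

Lemma resolvingT : resolving e [set: T].
Proof. by apply/resolvingP => x y; apply: mem_resolves; rewrite inE. Qed.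

Lemma metric_dim_le (S : {set T}) : resolving e S -> metric_dim e <= #|S|.
Proof.
move=> resS; rewrite /metric_dim -minEnat.
exact: (Order.TotalTheory.bigmin_le_cond (T := nat)).
Qed.

Lemma exists_metric_basis : exists B : {set T}, metric_basis e B.
Proof.
case: (arg_minnP (fun S : {set T} => #|S|) resolvingT) => B resB minB.
exists B; split=> //; apply/eqP; rewrite eqn_leq metric_dim_le // andbT.
apply: (big_ind (leq #|B|)) => [| m n | S /minB] //; first exact: max_card.
by rewrite leq_min => -> ->.
Qed.

End Resolving.

Section UniversalVertex.
Variables (T : finType) (e : rel T) (v : T).
Hypothesis universal : forall w : T, w != v -> e v w.

Lemma dist_universal (x : T) : x != v -> dist e v x = 1.
Proof. by move=> xv; apply: dist_adj; rewrite 1?eq_sym ?universal. Qed.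

Lemma resolves_setD1_universal (B : {set T}) (x y : T) :
  resolves e B x y -> x != v -> y != v -> resolves e (B :\ v) x y.
Proof.
move=> /exists_inP[r rB dxy] xv yv; apply/exists_inP; exists r => //.
by rewrite !inE rB andbT; apply: contra_neq dxy => ->; rewrite !dist_universal.
Qed.

Lemma resolving_setD1_universal (B : {set T}) :
  resolving e B -> (forall x, x != v -> resolves e (B :\ v) x v) ->
  resolving e (B :\ v).
Proof.
move=> /resolvingP resB; apply: resolving_pivot => x y xv yv xy.
exact: resolves_setD1_universal (resB x y xy) xv yv.
Qed.

Lemma resolving_swap_universal (B : {set T}) (x0 : T) :
  resolving e B -> x0 != v -> ~~ resolves e (B :\ v) x0 v ->
  resolving e (x0 |: B :\ v).
Proof.
move=> /resolvingP resB x0v twin; have sub := subsetUr [set x0] (B :\ v).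
have sepv x : x != v -> resolves e (x0 |: B :\ v) x v.
  move=> xv; case: (eqVneq x x0) => [-> | xx0].
    by apply: mem_resolves; rewrite ?setU11.
  have := resolves_split v (resolves_setD1_universal (resB x x0 xx0) xv x0v).
  by rewrite (resolvesC _ _ v) (negbTE twin) orbF; exact: resolvesS.
apply: resolving_pivot sepv => x y xv yv xy.
exact: resolvesS sub (resolves_setD1_universal (resB x y xy) xv yv).
Qed.

End UniversalVertex.

Theorem lemma4 (T : finType) (e : rel T) (v : T) :
  symmetric e -> irreflexive e -> gconnected e ->
  (forall w : T, w != v -> e v w) ->
  ~ basis_forced e v.
Proof.
move=> _ _ _ universal forced.
have [B [resB cardB]] := exists_metric_basis e.
have cardBD1 : #|B| = #|B :\ v|.+1 by rewrite (cardsD1 v B) forced.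
case: (pickP [pred x | (x != v) && ~~ resolves e (B :\ v) x v]) => [x0 | no_twin].
  case/andP=> x0v twin; have x0B : x0 \notin B :\ v.
    by apply: contra twin => x0B; exact: mem_resolves.
  have basis' : metric_basis e (x0 |: B :\ v).
    by split; [exact: resolving_swap_universal | rewrite cardsU1 x0B -cardB cardBD1].
  by have /setU1P[/eqP | ] := forced _ basis'; rewrite ?setD11 // eq_sym (negbTE x0v).
have resBD1 : resolving e (B :\ v).
  apply: resolving_setD1_universal => // x xv.
  by move: (no_twin x) => /=; rewrite xv => /negbFE.
by have := metric_dim_le resBD1; rewrite -cardB cardBD1 ltnn.
Qed.
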